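(* Let $n\ge 3$ and let $a_k,b_k\in\mathbb{R}$ with $a_k^2+b_k^2\ne 0$ for $k=1,\dots,n$, defining lines $l^k:=\{(x,y):a_kx+b_ky-1=0\}$. Assume $$a_ib_{i^\oplus}-b_ia_{i^\oplus}>0\quad\text{for all } i\in\{1,\dots,n\}$$ (so the intersection points $V_{ii^\oplus}:=l^i\cap l^{i^\oplus}$ exist), and $$-a_k(b_i-b_j)+b_k(a_i-a_j)-(a_ib_j-b_ia_j)<0\quad\text{for all } i\in\{1,\dots,n\},\ j=i^{\oplus},\ k\in\{1,\dots,n\}\setminus\{i,j\}.$$ Let $S:=\{(x,y)\in\mathbb{R}^2: a_kx+b_ky-1\le 0 \text{ for all } k=1,\dots,n\}$. Then the boundary of $S$ is an enclosed, non-degenerate, $n$-sided convex polygon containing the origin $(0,0)$ in its interior; namely, it is the closed polygon formed by the sequence of points $(V_{12},V_{23},\dots,V_{(n-1)n},V_{n1},V_{12})$, whose $n$ vertices $V_{12},\dots,V_{n1}$ are pairwise distinct, with no three cyclically consecutive vertices collinear, and whose edge $[V_{k^\ominus k},V_{kk^\oplus}]$ lies on $l^k$ for each $k$.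
   Context: For $i\in\{1,\dots,n\}$, $i^{\oplus}:=i+1$ if $i\le n-1$ and $n^{\oplus}:=1$; $i^{\ominus}$ is defined by $j=i^{\ominus}$ iff $j^{\oplus}=i$. For lines $l^i,l^j$ with $D_{ij}:=a_ib_j-b_ia_j\ne0$, $l^i\cap l^j$ is the single point $\left(-\frac{b_i-b_j}{D_{ij}},\frac{a_i-a_j}{D_{ij}}\right)$. *)

From HB Require Import structures.
From mathcomp Require Import all_boot all_order all_algebra.
From mathcomp Require Import all_classical all_reals topology normedtype.
Set Implicit Arguments. Unset Strict Implicit. Unset Printing Implicit Defensive.
Import Order.TTheory GRing.Theory Num.Theory.
Import numFieldTopology.Exports numFieldNormedType.Exports.
Local Open Scope ring_scope.
Local Open Scope classical_set_scope.

(* Indices 1..n of the paper are 'I_n = {0,..,n-1}; i^(+) = ordS i, i^(-) = ord_pred i. *)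
Section Defs.
Context {R : realType} {n : nat}.
Variables (a b : 'I_n -> R).

Definition Dab (i j : 'I_n) : R := a i * b j - b i * a j.

(* l^i cap l^j (when D_ij <> 0) *)
Definition Vx (i j : 'I_n) : R * R :=
  (- (b i - b j) / Dab i j, (a i - a j) / Dab i j).

Definition line (k : 'I_n) : set (R * R) :=
  [set p | a k * p.1 + b k * p.2 - 1 = 0].

Definition Sreg : set (R * R) :=
  [set p | forall k, a k * p.1 + b k * p.2 - 1 <= 0].
End Defs.

Definition segment {R : realType} (p q : R * R) : set (R * R) :=
  [set r | exists t : R, 0 <= t <= 1 /\
     r = ((1 - t) * p.1 + t * q.1, (1 - t) * p.2 + t * q.2)].

Definition collinear {R : realType} (p q r : R * R) : Prop :=
  (q.1 - p.1) * (r.2 - p.2) - (q.2 - p.2) * (r.1 - p.1) = 0.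

Definition hull {R : realType} {n : nat} (v : 'I_n -> R * R) : set (R * R) :=
  [set r | exists w : 'I_n -> R, (forall i, 0 <= w i) /\ \sum_(i < n) w i = 1 /\
     r = (\sum_(i < n) w i * (v i).1, \sum_(i < n) w i * (v i).2)].

From HB Require Import structures.
From mathcomp Require Import all_boot all_order all_algebra.
From mathcomp Require Import all_classical all_reals topology normedtype.
From mathcomp Require Import ring lra zify.
Import Order.TTheory GRing.Theory Num.Theory.
Import numFieldTopology.Exports numFieldNormedType.Exports.
Local Open Scope ring_scope.
Local Open Scope classical_set_scope.
Set Implicit Arguments. Unset Strict Implicit. Unset Printing Implicit Defensive.

(* Write f_k(p) = a_k x + b_k y - 1, so that S = {p | f_k(p) <= 0 for all k}
   and V_i = l^i cap l^{i+}.  By Cramer's rule f_i(V_i) = f_{i+}(V_i) = 0,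
   and the second hypothesis of the theorem says precisely f_k(V_i) < 0 for
   every other k; in particular every vertex lies in S.  Everything follows
   from these sign patterns together with two facts of plane geometry:

   - consecutive vertices turn counterclockwise around the origin,
     cross(V_i, V_{i+}) > 0, and since the n turns close up, the vertices
     are not contained in any open half-plane through the origin; hence every
     point p lies in some angular sector (V_i, V_{i+}) and is a nonnegative
     combination of V_i and V_{i+};
   - the points of S on l^k are exactly the edge [V_{k- k}, V_{k k+}].

   The first fact gives S = hull of the vertices (the weights of p on V_i and
   V_{i+} sum to at most 1 because f_{i+}(p) <= 0, and the origin is itself in
   the hull); the second, together with the description of the interior of S
   as {f_k < 0 for all k}, identifies the boundary of S with the union of the
   edges. *)

Lemma val_iter_ordS (n : nat) (i : 'I_n) (k : nat) :
  val (iter k (@ordS n) i) = ((i + k) %% n)%N.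
Proof.
elim: k => [|k IH] /=; first by rewrite addn0 modn_small.
by rewrite IH -addn1 modnDml addn1 addnS.
Qed.

Lemma iter_ordS_n (n : nat) (i : 'I_n) : iter n (@ordS n) i = i.
Proof. by apply: val_inj; rewrite val_iter_ordS modnDr modn_small. Qed.

Lemma iter_ordS_reach (n : nat) (i j : 'I_n) : exists k, iter k (@ordS n) i = j.
Proof.
exists (j + (n - i))%N; apply: val_inj; rewrite val_iter_ordS.
by rewrite addnCA subnKC ?modnDr ?modn_small // ltnW.
Qed.

Lemma iter_ordS_neq (n : nat) (i : 'I_n) (k : nat) :
  (0 < k < n)%N -> iter k (@ordS n) i != i.
Proof.
move=> /andP [k0 kn]; apply/eqP => /(congr1 val); rewrite val_iter_ordS => h.
have : ((i + k) %% n == (i + 0) %% n)%N by rewrite h addn0 modn_small.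
by rewrite eqn_modDl mod0n modn_small // => /eqP hk; rewrite hk in k0.
Qed.

Lemma ordS_neq (n : nat) (i : 'I_n) : (3 <= n)%N -> ordS i != i.
Proof. by move=> hn; apply: (@iter_ordS_neq n i 1); lia. Qed.

Lemma ordSS_neq (n : nat) (i : 'I_n) : (3 <= n)%N -> ordS (ordS i) != i.
Proof. by move=> hn; apply: (@iter_ordS_neq n i 2); lia. Qed.

Section Plane.
Variable R : realType.
Implicit Types (c d t : R) (p q v w : R * R).

Definition aff c d p : R := c * p.1 + d * p.2 - 1.

Definition comb t v w : R * R := ((1 - t) * v.1 + t * w.1, (1 - t) * v.2 + t * w.2).

Definition cross v w : R := v.1 * w.2 - v.2 * w.1.
Definition dot v w : R := v.1 * w.1 + v.2 * w.2.

Lemma aff_comb c d t v w : aff c d (comb t v w) = (1 - t) * aff c d v + t * aff c d w.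
Proof. by rewrite /aff /comb /=; ring. Qed.

Lemma aff_cone c d (al be : R) v w :
  aff c d (al * v.1 + be * w.1, al * v.2 + be * w.2) =
  al * aff c d v + be * aff c d w + al + be - 1.
Proof. by rewrite /aff /=; ring. Qed.

(* the sign of the cross product is transitive on vectors lying in one open
   half-plane {x | 0 < dot u x}: angles there add up without wrapping around *)
Lemma cross_trans (u v w z : R * R) :
  0 < dot u v -> 0 < dot u w -> 0 < dot u z ->
  0 < cross v w -> 0 < cross w z -> 0 < cross v z.
Proof.
move=> hv hw hz hvw hwz.
have e : cross v z * dot u w = cross v w * dot u z + cross w z * dot u v.
  by rewrite /cross /dot; ring.
have : 0 < cross v z * dot u w by rewrite e addr_gt0 ?mulr_gt0.
by rewrite pmulr_lgt0.
Qed.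

Lemma cone_decomp v w p :
  0 < cross v w -> 0 <= cross v p -> cross w p <= 0 ->
  exists al be : R, [/\ 0 <= al, 0 <= be & p = (al * v.1 + be * w.1, al * v.2 + be * w.2)].
Proof.
move=> hvw hvp hwp.
exists (- cross w p / cross v w), (cross v p / cross v w); split.
- by rewrite divr_ge0 ?oppr_ge0 // ltW.
- by rewrite divr_ge0 // ltW.
have : cross v w != 0 by rewrite gt_eqF.
case: v w p {hvw hvp hwp} => v1 v2 [w1 w2] [p1 p2]; rewrite /cross /= => hvw.
by congr (_, _); field.
Qed.

Lemma not_collinear_off_line c d p q r :
  aff c d q = 0 -> aff c d r = 0 -> q <> r -> aff c d p < 0 -> ~ collinear p q r.
Proof.
case: p q r => p1 p2 [q1 q2] [r1 r2]; rewrite /aff /collinear /= => hq hr hqr hp hc.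
(* (r - q) f(p) is a combination of f(q), f(r) and the collinearity
   determinant, so collinearity would force r = q *)
have hp0 : c * p1 + d * p2 - 1 != 0 by rewrite lt_eqF.
have e1 : (r1 - q1) * (c * p1 + d * p2 - 1) =
   d * ((q1 - p1) * (r2 - p2) - (q2 - p2) * (r1 - p1))
   - (q1 - p1) * ((c * r1 + d * r2 - 1) - (c * q1 + d * q2 - 1))
   + (r1 - q1) * (c * q1 + d * q2 - 1) by ring.
have e2 : (r2 - q2) * (c * p1 + d * p2 - 1) =
   (r2 - q2) * (c * q1 + d * q2 - 1)
   - (q2 - p2) * ((c * r1 + d * r2 - 1) - (c * q1 + d * q2 - 1))
   - c * ((q1 - p1) * (r2 - p2) - (q2 - p2) * (r1 - p1)) by ring.
rewrite hq hr hc subrr !mulr0 !subrr addr0 in e1 e2.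
move/eqP: e1; rewrite mulf_eq0 (negbTE hp0) orbF subr_eq0 => /eqP e1.
move/eqP: e2; rewrite mulf_eq0 (negbTE hp0) orbF subr_eq0 => /eqP e2.
by apply: hqr; rewrite e1 e2.
Qed.

Lemma on_line_comb c d v w p :
  c ^+ 2 + d ^+ 2 != 0 -> v <> w ->
  aff c d v = 0 -> aff c d w = 0 -> aff c d p = 0 -> exists t, p = comb t v w.
Proof.
case: v w p => v1 v2 [w1 w2] [p1 p2]; rewrite /aff /comb /= => hcd hvw hv hw hp.
have hN : (w1 - v1) ^+ 2 + (w2 - v2) ^+ 2 != 0.
  apply/negP; rewrite paddr_eq0 ?sqr_ge0 // !sqrf_eq0 !subr_eq0 => /andP [/eqP e1 /eqP e2].
  by apply: hvw; rewrite e1 e2.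
(* p - v and w - v are both orthogonal to the normal (c, d), hence parallel;
   t is then the ratio of their lengths along w - v *)
pose cr := (p1 - v1) * (w2 - v2) - (p2 - v2) * (w1 - v1).
have hcr : cr = 0.
  have e : (c ^+ 2 + d ^+ 2) * cr =
    c * ((w2 - v2) * ((c * p1 + d * p2 - 1) - (c * v1 + d * v2 - 1))
         - (p2 - v2) * ((c * w1 + d * w2 - 1) - (c * v1 + d * v2 - 1)))
    + d * ((p1 - v1) * ((c * w1 + d * w2 - 1) - (c * v1 + d * v2 - 1))
         - (w1 - v1) * ((c * p1 + d * p2 - 1) - (c * v1 + d * v2 - 1))) by rewrite /cr; ring.
  move: e; rewrite hv hw hp subrr !mulr0 !subrr !mulr0 addr0.
  by move/eqP; rewrite mulf_eq0 (negbTE hcd) => /eqP.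
exists (((p1 - v1) * (w1 - v1) + (p2 - v2) * (w2 - v2)) / ((w1 - v1) ^+ 2 + (w2 - v2) ^+ 2)).
set t := _ / _.
have e1 : (p1 - (1 - t) * v1 - t * w1) * ((w1 - v1) ^+ 2 + (w2 - v2) ^+ 2) = (w2 - v2) * cr.
  by rewrite /t /cr; field.
have e2 : (p2 - (1 - t) * v2 - t * w2) * ((w1 - v1) ^+ 2 + (w2 - v2) ^+ 2) = - (w1 - v1) * cr.
  by rewrite /t /cr; field.
rewrite hcr !mulr0 in e1 e2.
move/eqP: e1; rewrite mulf_eq0 (negbTE hN) orbF subr_eq0 => /eqP e1.
move/eqP: e2; rewrite mulf_eq0 (negbTE hN) orbF subr_eq0 => /eqP e2.
by congr (_, _); lra.
Qed.

End Plane.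

Section Topology.
Variable R : realType.

Lemma aff_continuous (c d : R) : continuous (aff c d).
Proof.
move=> p; apply: cvgB; last exact: cvg_cst.
by apply: cvgD; apply: cvgM; [exact: cvg_cst | exact: cvg_fst | exact: cvg_cst | exact: cvg_snd].
Qed.
Arguments aff_continuous : clear implicits.

Lemma interior_shift (A : set (R * R)) (p : R * R) (c d : R) :
  interior A p -> exists2 t : R, 0 < t & A (p.1 + t * c, p.2 + t * d).
Proof.
pose g (t : R) := (p.1 + t * c, p.2 + t * d).
have g0 : g 0 = p by rewrite /g !mul0r !addr0 -surjective_pairing.
have gcont : continuous g.
  move=> t; rewrite /g; apply: (@cvg_pair _ _ _ _ (nbhs (p.1 + t * c)) (nbhs (p.2 + t * d)) _ _ _
    (fun s => p.1 + s * c) (fun s => p.2 + s * d));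
  by apply: cvgD; [exact: cvg_cst | apply: cvgM; [exact: cvg_id | exact: cvg_cst]].
rewrite /interior -{1}g0 => hA.
have /nbhs_ballP [e /= e0 he] := gcont 0 A hA.
exists (e / 2); first by rewrite divr_gt0.
apply: he; rewrite /ball /= sub0r normrN gtr0_norm ?divr_gt0 //; lra.
Qed.

Variables (n : nat) (a b : 'I_n -> R).

Lemma closure_Sreg : closure (Sreg a b) = Sreg a b.
Proof.
apply/esym/closure_id.
have -> : Sreg a b = \bigcap_(k in setT) [set p | aff (a k) (b k) p <= 0].
  by apply/seteqP; split => p hp k => [_|]; apply: hp.
apply: closed_bigI => k _.
apply: (@preimage_closed _ _ (aff (a k) (b k)) [set x | x <= 0]); last exact: closed_le.
by move=> p _; exact: aff_continuous.
Qed.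

(* the interior of S is where all the inequalities are strict: near a point
   where l^k is tight, moving along the normal (a_k, b_k) leaves S *)
Lemma interior_Sreg : (forall k, a k ^+ 2 + b k ^+ 2 != 0) ->
  interior (Sreg a b) = [set p | forall k, aff (a k) (b k) p < 0].
Proof.
move=> hab; apply/seteqP; split => p /=.
  move=> hp k; rewrite lt_neqAle (interior_subset hp k) andbT.
  apply/eqP => hk0; have [t t0] := interior_shift (a k) (b k) hp.
  move/(_ k); change (aff (a k) (b k) (p.1 + t * a k, p.2 + t * b k) <= 0 -> False).
  have -> : aff (a k) (b k) (p.1 + t * a k, p.2 + t * b k) =
      aff (a k) (b k) p + t * (a k ^+ 2 + b k ^+ 2) by rewrite /aff /=; ring.
  rewrite hk0 add0r pmulr_rle0 // leNgt lt_def hab.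
  by rewrite addr_ge0 ?sqr_ge0.
move=> hp; rewrite /interior.
have : \forall q \near p, forall k, aff (a k) (b k) q < 0.
  apply: (@filter_forall _ _ (fun k q => aff (a k) (b k) q < 0) (nbhs p)) => k.
  exact: cvgr_lt _ (aff_continuous (a k) (b k) p) _ (hp k).
by apply: filterS => q hq k; apply/ltW/hq.
Qed.

End Topology.

Section Intersection.
Variables (R : realType) (n : nat) (a b : 'I_n -> R).
Implicit Types i j k : 'I_n.

Lemma aff_Vx_l i j : Dab a b i j != 0 -> aff (a i) (b i) (Vx a b i j) = 0.
Proof. by rewrite /aff /Vx /Dab /= => hD; field. Qed.

Lemma aff_Vx_r i j : Dab a b i j != 0 -> aff (a j) (b j) (Vx a b i j) = 0.
Proof. by rewrite /aff /Vx /Dab /= => hD; field. Qed.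

Lemma aff_Vx_lt i j k : 0 < Dab a b i j ->
  - a k * (b i - b j) + b k * (a i - a j) - Dab a b i j < 0 ->
  aff (a k) (b k) (Vx a b i j) < 0.
Proof.
move=> hD hk.
have -> : aff (a k) (b k) (Vx a b i j) =
    (- a k * (b i - b j) + b k * (a i - a j) - Dab a b i j) / Dab a b i j.
  by rewrite /aff /Vx /=; field; rewrite gt_eqF.
by rewrite pmulr_llt0 ?invr_gt0.
Qed.

Lemma cross_Vx_gt0 i j k : 0 < Dab a b i j -> 0 < Dab a b j k ->
  - a i * (b j - b k) + b i * (a j - a k) - Dab a b j k < 0 ->
  0 < cross (Vx a b i j) (Vx a b j k).
Proof.
move=> hij hjk hi.
have -> : cross (Vx a b i j) (Vx a b j k) =
    - (- a i * (b j - b k) + b i * (a j - a k) - Dab a b j k) / (Dab a b i j * Dab a b j k).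
  by rewrite /cross /Vx /Dab /=; field; rewrite !gt_eqF.
by rewrite divr_gt0 ?mulr_gt0 ?oppr_gt0.
Qed.

End Intersection.

Section Hull.
Variables (R : realType) (n : nat) (v : 'I_n -> R * R).

Lemma hull_point i : hull v (v i).
Proof.
have sum_delta (F : 'I_n -> R) : \sum_(j < n) (j == i)%:R * F j = F i.
  by rewrite (bigD1 i) //= eqxx mul1r big1 ?addr0 // => j /negbTE ->; rewrite mul0r.
exists (fun j => (j == i)%:R); split; first by move=> j; rewrite ler0n.
split; last by rewrite !sum_delta; case: (v i).
by have := sum_delta (fun=> 1); under eq_bigr do rewrite mulr1.
Qed.

Lemma hull_comb3 (c0 c1 c2 : R) (x y z : R * R) :
  0 <= c0 -> 0 <= c1 -> 0 <= c2 -> c0 + c1 + c2 = 1 ->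
  hull v x -> hull v y -> hull v z ->
  hull v (c0 * x.1 + c1 * y.1 + c2 * z.1, c0 * x.2 + c1 * y.2 + c2 * z.2).
Proof.
move=> h0 h1 h2 hs [wx [wx0 [wx1 ->]]] [wy [wy0 [wy1 ->]]] [wz [wz0 [wz1 ->]]] /=.
exists (fun j => c0 * wx j + c1 * wy j + c2 * wz j); split.
  by move=> j; rewrite !addr_ge0 ?mulr_ge0.
have lin (X : 'I_n -> R) : \sum_(j < n) (c0 * wx j + c1 * wy j + c2 * wz j) * X j =
    c0 * (\sum_(j < n) wx j * X j) + c1 * (\sum_(j < n) wy j * X j)
    + c2 * (\sum_(j < n) wz j * X j).
  by rewrite !mulr_sumr -!big_split /=; apply: eq_bigr => j _; ring.
split; last by rewrite !lin.
by rewrite !big_split /= -!mulr_sumr wx1 wy1 wz1 !mulr1.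
Qed.

Lemma hull_halfplane (c d : R) :
  (forall i, aff c d (v i) <= 0) -> hull v `<=` [set p | aff c d p <= 0].
Proof.
move=> hv _ [w [w0 [w1 ->]]] /=.
have -> : aff c d (\sum_(i < n) w i * (v i).1, \sum_(i < n) w i * (v i).2) =
    \sum_(i < n) w i * aff c d (v i).
  rewrite [RHS](eq_bigr (fun i => c * (w i * (v i).1) + d * (w i * (v i).2) - w i));
    last by move=> i _; rewrite /aff; ring.
  by rewrite sumrB big_split /= -!mulr_sumr w1.
by rewrite -oppr_ge0 -sumrN sumr_ge0 // => i _; rewrite -mulrN mulr_ge0 ?oppr_ge0.
Qed.

End Hull.

Section Polygon.
Variables (R : realType) (n : nat) (a b : 'I_n -> R).
Hypothesis hn : (3 <= n)%N.
Hypothesis hab : forall k, a k ^+ 2 + b k ^+ 2 != 0.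
Hypothesis hD : forall i, 0 < Dab a b i (ordS i).
Hypothesis hk : forall i k, k != i -> k != ordS i ->
  - a k * (b i - b (ordS i)) + b k * (a i - a (ordS i)) - Dab a b i (ordS i) < 0.
Implicit Types i j k : 'I_n.

Definition vertex i : R * R := Vx a b i (ordS i).
Arguments vertex : simpl never.

Local Notation f k := (aff (a k) (b k)).

Let i0 : 'I_n := Ordinal (leq_trans (isT : (0 < 3)%N) hn).

Lemma vertex_on_l i : f i (vertex i) = 0.
Proof. by apply: aff_Vx_l; rewrite gt_eqF. Qed.

Lemma vertex_on_r i : f (ordS i) (vertex i) = 0.
Proof. by apply: aff_Vx_r; rewrite gt_eqF. Qed.

Lemma vertex_on_pred k : f k (vertex (ord_pred k)) = 0.
Proof. by have := vertex_on_r (ord_pred k); rewrite ord_predK. Qed.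

Lemma vertex_off i k : k != i -> k != ordS i -> f k (vertex i) < 0.
Proof. by move=> ki kSi; apply: aff_Vx_lt => //; apply: hk. Qed.

Lemma vertex_in_S i : Sreg a b (vertex i).
Proof.
move=> k; change (f k (vertex i) <= 0).
have [->|ki] := eqVneq k i; first by rewrite vertex_on_l.
have [->|kSi] := eqVneq k (ordS i); first by rewrite vertex_on_r.
exact/ltW/vertex_off.
Qed.

(* distinct indices give distinct vertices: V_i = V_j would put V_i on l^j,
   so j = i+, and then on l^{i++} as well *)
Lemma vertex_inj i j : i != j -> vertex i <> vertex j.
Proof.
move=> ij e; have onj := vertex_on_l j; rewrite -e in onj.
have ji : j != i by rewrite eq_sym.
have [jSi|jSi] := eqVneq j (ordS i); last by have := vertex_off ji jSi; rewrite onj ltxx.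
have onSj := vertex_on_r j; rewrite -e jSi in onSj.
have h1 : ordS (ordS i) != i by apply: ordSS_neq.
have h2 : ordS (ordS i) != ordS i by apply: ordS_neq.
by have := vertex_off h1 h2; rewrite onSj ltxx.
Qed.

(* V_i, V_{i+} turn counterclockwise: V_{i++} is strictly inside l^i's half-plane *)
Lemma vertex_cross i : 0 < cross (vertex i) (vertex (ordS i)).
Proof.
by apply: cross_Vx_gt0 => //; apply: hk; rewrite eq_sym ?ordS_neq ?ordSS_neq.
Qed.

(* the vertices wind around the origin: they are not all contained in an open
   half-plane through the origin, since there the turning angles could not add
   up to a full turn *)
Lemma vertices_not_in_halfplane (u : R * R) : ~ (forall i, 0 < dot u (vertex i)).
Proof.
move=> hu.
have turn (m : nat) : 0 < cross (vertex i0) (vertex (iter m.+1 (@ordS n) i0)).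
  elim: m => [|m IH]; first exact: vertex_cross.
  exact: cross_trans (hu _) (hu _) (hu _) IH (vertex_cross _).
have := turn n.-1; rewrite prednK ?iter_ordS_n; last by lia.
by rewrite /cross mulrC subrr ltxx.
Qed.

Lemma sector (p : R * R) :
  exists i, 0 <= cross (vertex i) p /\ cross (vertex (ordS i)) p <= 0.
Proof.
have [j hj] : exists j, 0 <= cross (vertex j) p.
  apply/not_existsP => hno; apply: (@vertices_not_in_halfplane (- p.2, p.1)) => i.
  by move/negP: (hno i); rewrite -ltNge /cross /dot /=; lra.
have [i hi] : exists i, cross (vertex i) p <= 0.
  apply/not_existsP => hno; apply: (@vertices_not_in_halfplane (p.2, - p.1)) => i.
  by move/negP: (hno i); rewrite -ltNge /cross /dot /=; lra.
apply/not_existsP => hno.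
have step l : 0 <= cross (vertex l) p -> 0 < cross (vertex (ordS l)) p.
  by move=> hl; rewrite ltNge; apply/negP => hSl; apply: (hno l).
have all_ge0 m : 0 <= cross (vertex (iter m (@ordS n) j)) p.
  by elim: m => // m IH; exact/ltW/step.
have [m hm] := iter_ordS_reach j (ord_pred i).
by have := step _ (all_ge0 m); rewrite hm ord_predK; lra.
Qed.

(* no three consecutive vertices are collinear: V_{i+} and V_{i++} lie on
   l^{i++}, while V_i lies strictly inside its half-plane *)
Lemma vertices_not_collinear i :
  ~ collinear (vertex i) (vertex (ordS i)) (vertex (ordS (ordS i))).
Proof.
have SSi_i : ordS (ordS i) != i by apply: ordSS_neq.
have SSi_Si : ordS (ordS i) != ordS i by apply: ordS_neq.
apply: (not_collinear_off_line (vertex_on_r (ordS i)) (vertex_on_l (ordS (ordS i)))).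
  by apply: vertex_inj; rewrite eq_sym.
exact: vertex_off.
Qed.

(* the origin is in the hull: -V_{i0} lies in some sector, so it is
   al V_i + be V_{i+} and 0 is a convex combination of V_{i0}, V_i, V_{i+} *)
Lemma origin_in_hull : hull vertex (0, 0).
Proof.
have [i [h1 h2]] := sector (- (vertex i0).1, - (vertex i0).2).
have [al [be [al0 be0 e]]] := cone_decomp (vertex_cross i) h1 h2.
have e1 : - (vertex i0).1 = al * (vertex i).1 + be * (vertex (ordS i)).1 := congr1 fst e.
have e2 : - (vertex i0).2 = al * (vertex i).2 + be * (vertex (ordS i)).2 := congr1 snd e.
have s0 : 0 < 1 + al + be by lra.
have -> : ((0 : R), (0 : R)) =
    ((1 + al + be)^-1 * (vertex i0).1 + al / (1 + al + be) * (vertex i).1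
       + be / (1 + al + be) * (vertex (ordS i)).1,
     (1 + al + be)^-1 * (vertex i0).2 + al / (1 + al + be) * (vertex i).2
       + be / (1 + al + be) * (vertex (ordS i)).2).
  rewrite -[(vertex i0).1]opprK -[(vertex i0).2]opprK e1 e2.
  by congr (_, _); ring.
apply: hull_comb3; try exact: hull_point; rewrite ?divr_ge0 ?invr_ge0 ?(ltW s0) //.
by field; rewrite gt_eqF.
Qed.

(* S is the convex hull of the vertices: a point of S lies in some sector
   (V_i, V_{i+}), where it is a nonnegative combination of V_i and V_{i+}
   whose weights sum to at most 1 since the point lies below l^{i+}; the
   remaining weight is put on the origin *)
Lemma S_eq_hull : Sreg a b = hull vertex.
Proof.
apply/seteqP; split => p; last first.
  by move=> hp k; apply: (hull_halfplane (fun i => vertex_in_S i k)).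
move=> hp; have [i [h1 h2]] := sector p.
have [al [be [al0 be0 e]]] := cone_decomp (vertex_cross i) h1 h2.
have weights_le1 : al + be <= 1.
  have := hp (ordS i); change (f (ordS i) p <= 0 -> al + be <= 1).
  by rewrite e aff_cone vertex_on_r vertex_on_l !mulr0 !add0r; lra.
have := hull_comb3 al0 be0 _ _ (hull_point vertex i) (hull_point vertex (ordS i)) origin_in_hull.
by rewrite e /= => /(_ (1 - al - be)); rewrite !mulr0 !addr0; apply; lra.
Qed.

Lemma edge_on_line k : segment (vertex (ord_pred k)) (vertex k) `<=` line a b k.
Proof.
move=> _ [t [_ ->]]; change (f k (comb t (vertex (ord_pred k)) (vertex k)) = 0).
by rewrite aff_comb vertex_on_pred vertex_on_l !mulr0 addr0.
Qed.

Lemma edge_in_S k : segment (vertex (ord_pred k)) (vertex k) `<=` Sreg a b.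
Proof.
move=> _ [t [/andP [t0 t1] ->]] j.
change (f j (comb t (vertex (ord_pred k)) (vertex k)) <= 0).
have hPk : f j (vertex (ord_pred k)) <= 0 := vertex_in_S (ord_pred k) j.
have hkk : f j (vertex k) <= 0 := vertex_in_S k j.
by rewrite aff_comb; nra.
Qed.

(* conversely a point of S on l^k lies on the edge [V_{k- k}, V_{k k+}]:
   it is an affine combination of the two vertices, with nonnegative weights
   because it lies below l^{k-} and l^{k+} *)
Lemma S_on_line_in_edge k p :
  Sreg a b p -> f k p = 0 -> segment (vertex (ord_pred k)) (vertex k) p.
Proof.
move=> hp hpk.
have Pk_k : ord_pred k != k by have := ordS_neq (ord_pred k) hn; rewrite ord_predK eq_sym.
have Sk_Pk : ordS k != ord_pred k by have := ordSS_neq (ord_pred k) hn; rewrite ord_predK.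
have Sk_k : ordS k != k by apply: ordS_neq.
have [t ep] := on_line_comb (hab k) (vertex_inj Pk_k) (vertex_on_pred k) (vertex_on_l k) hpk.
subst p; exists t; split => //.
have offP : f (ordS k) (vertex (ord_pred k)) < 0.
  by apply: vertex_off; rewrite ?ord_predK.
have offS : f (ord_pred k) (vertex k) < 0 by apply: vertex_off; rewrite // eq_sym.
have hP : f (ord_pred k) (comb t (vertex (ord_pred k)) (vertex k)) <= 0 := hp (ord_pred k).
have hS : f (ordS k) (comb t (vertex (ord_pred k)) (vertex k)) <= 0 := hp (ordS k).
move: hP hS; rewrite !aff_comb vertex_on_l -{2}[k]ord_predK vertex_on_r ord_predK.
by move=> hP hS; apply/andP; split; nra.
Qed.

Lemma S_boundary :
  Sreg a b `\` [set p | forall k, f k p < 0] =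
  [set p | exists k, segment (vertex (ord_pred k)) (vertex k) p].
Proof.
apply/seteqP; split => p /=.
  move=> [hp /existsNP [k /negP]]; rewrite -leNgt => hk0.
  by exists k; apply: S_on_line_in_edge => //; apply/eqP; rewrite eq_le hk0 andbT; exact: hp.
move=> [k hpk]; split; first exact: edge_in_S hpk.
have onk : f k p = 0 := edge_on_line hpk.
by move/(_ k); rewrite onk ltxx.
Qed.

End Polygon.

Theorem theorem1 (R : realType) (n : nat) (a b : 'I_n -> R)
  (hn : (3 <= n)%N)
  (hab : forall k, a k ^+ 2 + b k ^+ 2 != 0)
  (hD : forall i, 0 < Dab a b i (ordS i))
  (hk : forall i k, k != i -> k != ordS i ->
     - a k * (b i - b (ordS i)) + b k * (a i - a (ordS i)) - Dab a b i (ordS i) < 0) :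
  let V := fun i : 'I_n => Vx a b i (ordS i) in
  let S := Sreg a b in
  (* vertices pairwise distinct *)
  (forall i j : 'I_n, i != j -> V i <> V j) /\
  (* no three cyclically consecutive vertices collinear *)
  (forall i : 'I_n, ~ collinear (V i) (V (ordS i)) (V (ordS (ordS i)))) /\
  (* edge [V_{k- k}, V_{k k+}] lies on l^k *)
  (forall k : 'I_n, segment (V (ord_pred k)) (V k) `<=` line a b k) /\
  (* the boundary of S is the closed polygon V_12, ..., V_n1, V_12 *)
  (closure S `\` interior S = [set p | exists k : 'I_n, segment (V (ord_pred k)) (V k) p]) /\
  (* S is the (convex, bounded) region enclosed: the convex hull of the vertices *)
  (S = hull V) /\
  (* the origin is an interior point *)
  interior S (0, 0).
Proof.
move=> V S; have -> : V = vertex a b by [].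
split; first exact: vertex_inj hn hD hk.
split; first exact: vertices_not_collinear hn hD hk.
split; first exact: edge_on_line hD.
split; first by rewrite closure_Sreg interior_Sreg // (S_boundary hn hab hD hk).
split; first exact: S_eq_hull hn hD hk.
by rewrite interior_Sreg // => k; rewrite /aff /= !mulr0 add0r sub0r ltrN10.
Qed.
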